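(* Let $R=k[x_1,\dots,x_m]$ be a polynomial ring over a field $k$, $\lambda:\mathbb Z^m\to\mathbb Z$ a linear map, and $I$ a homogeneous ideal of $R$. With the notation $\widetilde L$ defined in the context, for all $n\ge0$, $$\widetilde{I^n}=\widetilde I^{\,n}:\langle t\rangle=\bigcup_{r\ge0}(\widetilde I^{\,n}:t^r).$$
   Context: For a monomial $u=x^b$ set $\lambda(u)=\lambda(b)$. For $0\ne g=\sum a_iu_i\in R$ ($a_i\in k\setminus\{0\}$, $u_i$ distinct monomials) with $b(g)=\max\lambda(u_i)$, put $g^*=t^{b(g)}g(t^{-\lambda(x_1)}x_1,\dots,t^{-\lambda(x_m)}x_m)\in R[t]$, where $t$ is a new variable. For an ideal $L\subseteq R$ let $L^*\subseteq R[t]$ be the ideal generated by $\{g^*: g\in L\}$, let $S=k[t]_{(t)}[x_1,\dots,x_m]$, and set $\widetilde L=L^*S$. *)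

From HB Require Import structures.
From mathcomp Require Import all_boot all_order all_algebra.
From mathcomp Require Import fraction.
From mathcomp Require Import mpoly.
Set Implicit Arguments. Unset Strict Implicit. Unset Printing Implicit Defensive.
Import Order.TTheory GRing.Theory Num.Theory.
Local Open Scope ring_scope.

(* Subsets of a ring T are predicates T -> Prop.  [Rs] is the ambient subring
   (all of T for R itself, the subring S inside a fraction field otherwise). *)

Definition gen_ideal (T : comNzRingType) (Rs A : T -> Prop) : T -> Prop :=
  fun z => exists n (c a : 'I_n -> T),
    (forall i, Rs (c i)) /\ (forall i, A (a i)) /\ z = \sum_(i < n) c i * a i.

Definition pow_ideal (T : comNzRingType) (Rs J : T -> Prop) (n : nat) : T -> Prop :=
  gen_ideal Rs (fun z => exists a : 'I_n -> T,
                   (forall i, J (a i)) /\ z = \prod_(i < n) a i).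

Definition colon_pow (T : comNzRingType) (Rs J : T -> Prop) (x : T) (r : nat)
  : T -> Prop := fun z => Rs z /\ J (x ^+ r * z).

Definition saturation (T : comNzRingType) (Rs J : T -> Prop) (x : T) : T -> Prop :=
  fun z => exists r : nat, colon_pow Rs J x r z.

Definition is_ideal (T : comNzRingType) (I : T -> Prop) : Prop :=
  I 0 /\ (forall f g, I f -> I g -> I (f + g)) /\ (forall r f, I f -> I (r * f)).

Definition homog_comp (k : fieldType) (m : nat) (d : nat) (f : {mpoly k[m]})
  : {mpoly k[m]} :=
  \sum_(u <- msupp f | mdeg u == d) f@_u *: 'X_[u].

Definition homogeneous_ideal (k : fieldType) (m : nat) (I : {mpoly k[m]} -> Prop)
  : Prop := is_ideal I /\ (forall f d, I f -> I (homog_comp d f)).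

(* a linear map lambda : Z^m -> Z is given by its values w i = lambda(e_i) *)
Definition lam (m : nat) (w : 'I_m -> int) (u : 'X_{1..m}) : int :=
  \sum_(i < m) w i * (u i)%:Z.

Definition bdeg (k : fieldType) (m : nat) (w : 'I_m -> int) (g : {mpoly k[m]})
  : int :=
  \big[Num.max/lam w (head 0%MM (msupp g))]_(u <- msupp g) lam w u.

(* g^* = t^{b(g)} g(t^{-lambda(x_1)} x_1, ..., t^{-lambda(x_m)} x_m) in R[t],
   written out monomial by monomial: a u |-> a t^{b(g)-lambda(u)} u *)
Definition gstar (k : fieldType) (m : nat) (w : 'I_m -> int) (g : {mpoly k[m]})
  : {poly {mpoly k[m]}} :=
  \sum_(u <- msupp g) (g@_u *: 'X_[u])%:P * 'X^(absz (bdeg w g - lam w u)).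

Definition Frac (k : fieldType) (m : nat) := {fraction {poly {mpoly k[m]}}}.

Definition toF (k : fieldType) (m : nat) (f : {poly {mpoly k[m]}}) : Frac k m :=
  FracField.tofrac f.

Definition kt_in (k : fieldType) (m : nat) (s : {poly k}) : {poly {mpoly k[m]}} :=
  map_poly (fun c : k => c%:MP) s.

(* S = k[t]_(t)[x_1..x_m], realised as the subring of Frac(R[t]) of the
   fractions f / s with f in R[t] and s in k[t] \ (t) *)
Definition inS (k : fieldType) (m : nat) : Frac k m -> Prop :=
  fun z => exists (f : {poly {mpoly k[m]}}) (s : {poly k}),
    s.[0] != 0 /\ z = toF f / toF (kt_in m s).

Definition tS (k : fieldType) (m : nat) : Frac k m := toF (k:=k) (m:=m) 'X.

(* ~L = L^* S : the ideal of S generated by the g^*, g in L (g <> 0);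
   this equals the extension to S of the ideal L^* of R[t]. *)
Definition tilde (k : fieldType) (m : nat) (w : 'I_m -> int)
  (L : {mpoly k[m]} -> Prop) : Frac k m -> Prop :=
  gen_ideal (@inS k m) (fun z => exists g, L g /\ g != 0 /\ z = toF (gstar w g)).

Definition powR (k : fieldType) (m : nat) (I : {mpoly k[m]} -> Prop) (n : nat) :=
  pow_ideal (fun _ => True) I n.

(* For y in R[t] let Q_e(y) in R collect the terms a t^i x^v of y with
   i + lambda(v) = e, evaluated at t = 1.  For an ideal L of R, the y all of
   whose Q_e(y) lie in L form an ideal of R[t] that contains every g^* with
   g in L, is stable under division by t, and is generated by these g^*,
   since y = sum_e t^(e - b(Q_e y)) (Q_e y)^*.  Hence L^* R[t] is saturated
   with respect to t.
   As g^* = t^b(g) g(t^-lambda(x_1) x_1, ..., t^-lambda(x_m) x_m), a product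
   g_1^* ... g_n^* agrees up to powers of t with (g_1 ... g_n)^*.  This puts
   ~(I^n) inside ~I^n : <t>; conversely an element of ~I^n : <t>, once its
   k[t]-denominators are cleared, is t^-r times an element of (I^n)^* R[t],
   hence lies in ~(I^n) by saturation. *)

From HB Require Import structures.
From mathcomp Require Import all_boot all_order all_algebra.
From mathcomp Require Import fraction.
From mathcomp Require Import mpoly.
From mathcomp Require Import zify.
Set Implicit Arguments. Unset Strict Implicit. Unset Printing Implicit Defensive.
Import Order.TTheory GRing.Theory Num.Theory.
Local Open Scope ring_scope.

Section GenIdeal.
Variables (T : comNzRingType) (Rs : T -> Prop).

Lemma gen_ideal_ind (A J : T -> Prop) :
  J 0 -> (forall x y, J x -> J y -> J (x + y)) ->
  (forall c x, Rs c -> A x -> J (c * x)) ->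
  forall z, gen_ideal Rs A z -> J z.
Proof.
move=> J0 JD JM z [n [c [a [Hc [Ha ->]]]]].
by apply: (big_ind J) => // i _; apply: JM.
Qed.

Lemma gen_ideal_min A (J : T -> Prop) :
  J 0 -> (forall x y, J x -> J y -> J (x + y)) ->
  (forall c x, Rs c -> J x -> J (c * x)) -> (forall x, A x -> J x) ->
  forall z, gen_ideal Rs A z -> J z.
Proof. by move=> J0 JD JM JA; apply: gen_ideal_ind => // c x Hc /JA; apply: JM. Qed.

Lemma gen_ideal0 A : gen_ideal Rs A 0.
Proof.
by exists 0%N, (fun _ => 0), (fun _ => 0); rewrite big_ord0; do ![split] => // -[].
Qed.

Lemma gen_idealD A x y :
  gen_ideal Rs A x -> gen_ideal Rs A y -> gen_ideal Rs A (x + y).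
Proof.
move=> [n1 [c1 [a1 [Hc1 [Ha1 ->]]]]] [n2 [c2 [a2 [Hc2 [Ha2 ->]]]]].
pose glue (f1 : 'I_n1 -> T) (f2 : 'I_n2 -> T) (i : 'I_(n1 + n2)) :=
  match split i with inl j => f1 j | inr j => f2 j end.
exists (n1 + n2)%N, (glue c1 c2), (glue a1 a2).
do ![split]; try by move=> i; rewrite /glue; case: split.
rewrite big_split_ord /glue; congr (_ + _); apply: eq_bigr => i _.
  by rewrite -[lshift _ _]/(unsplit (inl i)) unsplitK.
by rewrite -[rshift _ _]/(unsplit (inr i)) unsplitK.
Qed.

Lemma gen_ideal_mono A B :
  (forall x, A x -> B x) -> forall z, gen_ideal Rs A z -> gen_ideal Rs B z.
Proof.
move=> AB; apply: gen_ideal_ind; [exact: gen_ideal0|exact: gen_idealD|].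
move=> c x Hc Ax; exists 1%N, (fun _ => c), (fun _ => x); rewrite big_ord1.
by do ![split] => // _; apply: AB.
Qed.

Hypothesis Rs1 : Rs 1.
Hypothesis RsM : forall x y, Rs x -> Rs y -> Rs (x * y).

Lemma gen_ideal_mem A x : A x -> gen_ideal Rs A x.
Proof. by move=> Ax; exists 1%N, (fun _ => 1), (fun _ => x); rewrite big_ord1 mul1r. Qed.

Lemma gen_idealM A c x : Rs c -> gen_ideal Rs A x -> gen_ideal Rs A (c * x).
Proof.
move=> Hc [n [c' [a [Hc' [Ha ->]]]]].
exists n, (fun i => c * c' i), a; do ![split] => // [i|]; first exact: RsM.
by rewrite mulr_sumr; apply: eq_bigr => i _; exact: mulrA.
Qed.

Lemma gen_ideal_mul2 A B x y : gen_ideal Rs A x -> gen_ideal Rs B y ->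
  gen_ideal Rs (fun z => exists a b, A a /\ B b /\ z = a * b) (x * y).
Proof.
move=> gx; move: y; apply: gen_ideal_ind.
- by rewrite mulr0; apply: gen_ideal0.
- by move=> y1 y2 H1 H2; rewrite mulrDr; apply: gen_idealD.
move=> c b Hc Bb; rewrite mulrCA; apply: gen_idealM => //.
move: x gx; apply: gen_ideal_ind.
- by rewrite mul0r; apply: gen_ideal0.
- by move=> y1 y2 H1 H2; rewrite mulrDl; apply: gen_idealD.
move=> c' a Hc' Aa; rewrite -mulrA; apply: gen_idealM => //.
by apply: gen_ideal_mem; exists a, b.
Qed.

Lemma gen_ideal_prod A n (y : 'I_n -> T) : (forall i, gen_ideal Rs A (y i)) ->
  gen_ideal Rs (fun z => exists a : 'I_n -> T,
                   (forall i, A (a i)) /\ z = \prod_(i < n) a i)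
    (\prod_(i < n) y i).
Proof.
elim: n y => [|n IH] y Hy.
  rewrite big_ord0; apply: gen_ideal_mem.
  by exists (fun _ => 0); rewrite big_ord0; split => // -[].
rewrite big_ord_recl.
have := gen_ideal_mul2 (Hy ord0) (IH _ (fun i => Hy (lift ord0 i))).
apply: gen_ideal_mono => z [a [b [Aa [[bb [Hbb ->]] ->]]]].
exists (fun i => if unlift ord0 i is Some j then bb j else a).
split; first by move=> i; case: unlift.
rewrite big_ord_recl unlift_none; congr (_ * _); apply: eq_bigr => i _.
by rewrite liftK.
Qed.

Lemma subring_exp u N : Rs u -> Rs (u ^+ N).
Proof. by move=> Ru; elim: N => [|N IH]; rewrite ?expr0 // exprS; apply: RsM. Qed.

Lemma gen_ideal_expMD A u x y : Rs u ->
  (exists N, gen_ideal Rs A (u ^+ N * x)) ->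
  (exists N, gen_ideal Rs A (u ^+ N * y)) ->
  exists N, gen_ideal Rs A (u ^+ N * (x + y)).
Proof.
move=> Ru [N1 H1] [N2 H2]; exists (N1 + N2)%N.
have -> : u ^+ (N1 + N2) * (x + y) = u ^+ N2 * (u ^+ N1 * x) + u ^+ N1 * (u ^+ N2 * y).
  by rewrite mulrDr exprD !mulrA [u ^+ N2 * _]mulrC.
by apply: gen_idealD; apply: gen_idealM => //; apply: subring_exp.
Qed.

End GenIdeal.

Lemma gen_ideal_is_ideal (T : comNzRingType) (A : T -> Prop) :
  is_ideal (gen_ideal (fun _ => True) A).
Proof.
split; first exact: gen_ideal0.
by split=> [x y|c x]; [apply: gen_idealD | apply: gen_idealM].
Qed.

Section LocalRing.
Variables (k : fieldType) (m : nat).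
Local Notation R := {mpoly k[m]}.
Local Notation P := {poly R}.
Local Notation F := (Frac k m).

Lemma toF0 : toF (0 : P) = 0. Proof. exact: rmorph0. Qed.
Lemma toF1 : toF (1 : P) = 1. Proof. exact: rmorph1. Qed.
Lemma toFD (p q : P) : toF (p + q) = toF p + toF q. Proof. exact: rmorphD. Qed.
Lemma toFM (p q : P) : toF (p * q) = toF p * toF q. Proof. exact: rmorphM. Qed.
Lemma toFXn (p : P) n : toF (p ^+ n) = toF p ^+ n. Proof. exact: rmorphXn. Qed.

Lemma toF_inj : injective (@toF k m).
Proof. by move=> x y /eqP; rewrite tofrac_eq => /eqP. Qed.

Lemma kt_inM (s1 s2 : {poly k}) : kt_in m (s1 * s2) = kt_in m s1 * kt_in m s2.
Proof. by rewrite /kt_in rmorphM. Qed.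

Lemma toF_kt_in_neq0 (s : {poly k}) : s.[0] != 0 -> toF (kt_in m s) != 0.
Proof.
move=> hs; rewrite /toF tofrac_eq0 /kt_in map_poly_eq0.
by apply: contra hs => /eqP ->; rewrite horner0.
Qed.

Lemma inS_toF (p : P) : inS (toF p).
Proof. by exists p, 1; rewrite /kt_in rmorph1 toF1 divr1 hornerC oner_neq0. Qed.

Lemma inS0 : inS (0 : F). Proof. by rewrite -toF0; apply: inS_toF. Qed.
Lemma inS1 : inS (1 : F). Proof. by rewrite -toF1; apply: inS_toF. Qed.

Lemma inSM (x y : F) : inS x -> inS y -> inS (x * y).
Proof.
move=> [f1 [s1 [h1 ->]]] [f2 [s2 [h2 ->]]].
exists (f1 * f2), (s1 * s2); rewrite hornerM mulf_neq0 //.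
by rewrite kt_inM !toFM mulf_div.
Qed.

Lemma inSD (x y : F) : inS x -> inS y -> inS (x + y).
Proof.
move=> [f1 [s1 [h1 ->]]] [f2 [s2 [h2 ->]]].
exists (f1 * kt_in m s2 + f2 * kt_in m s1), (s1 * s2); rewrite hornerM mulf_neq0 //.
by rewrite kt_inM toFD !toFM addf_div ?toF_kt_in_neq0.
Qed.

Lemma inS_kt_inV (s : {poly k}) : s.[0] != 0 -> inS (toF (kt_in m s))^-1.
Proof. by move=> hs; exists 1, s; rewrite toF1 div1r. Qed.

Lemma inS_tS : inS (tS k m).
Proof. exact: inS_toF. Qed.

Lemma inS_tS_exp (r : nat) : inS (tS k m ^+ r).
Proof. by rewrite /tS -toFXn; apply: inS_toF. Qed.

Lemma gen_ideal_toF (A : P -> Prop) (p : P) :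
  gen_ideal (fun _ => True) A p ->
  gen_ideal (@inS k m) (fun x => exists q, A q /\ x = toF q) (toF p).
Proof.
move: p; apply: gen_ideal_ind.
- by rewrite toF0; apply: gen_ideal0.
- by move=> x y H1 H2; rewrite toFD; apply: gen_idealD.
move=> c x _ Ax; rewrite toFM; apply: (gen_idealM inSM); first exact: inS_toF.
by apply: (gen_ideal_mem inS1); exists x.
Qed.

Lemma gen_ideal_inS_toF (A : P -> Prop) (z : F) :
  gen_ideal (@inS k m) (fun x => exists p, A p /\ x = toF p) z ->
  exists p d, [/\ gen_ideal (fun _ => True) A p, d.[0] != 0 &
              z = toF p / toF (kt_in m d)].
Proof.
move: z; apply: gen_ideal_ind.
- by exists 0, 1; rewrite hornerC oner_neq0 toF0 mul0r; split=> //; apply: gen_ideal0.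
- move=> x y [p1 [d1 [g1 h1 ->]]] [p2 [d2 [g2 h2 ->]]].
  exists (p1 * kt_in m d2 + p2 * kt_in m d1), (d1 * d2).
  rewrite hornerM mulf_neq0 // kt_inM toFD !toFM addf_div ?toF_kt_in_neq0 //.
  by split=> //; apply: gen_idealD; rewrite mulrC; apply: gen_idealM.
move=> c x [f [s [hs ->]]] [p [Ap ->]].
exists (f * p), s; split=> //; last by rewrite toFM mulrAC.
by apply: gen_idealM => //; apply: gen_ideal_mem.
Qed.

End LocalRing.

Lemma mcoeffXM (n : nat) (K : comNzRingType) (u v : 'X_{1..n}) (f : {mpoly K[n]}) :
  ('X_[u] * f)@_v = if (u <= v)%MM then f@_(v - u)%MM else 0.
Proof.
case: ifP => h.
  by rewrite mulrC; have := mcoeffMX f u (v - u)%MM; rewrite [(u + _)%MM]addmC submK.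
apply: memN_msupp_eq0; rewrite mulrC (perm_mem (msuppMX f u)).
by apply/mapP => -[u' _ hv]; move: h; rewrite hv lem_addr.
Qed.

Lemma mcoeff_sum_msupp (n : nat) (K : nzRingType) (c : 'X_{1..n} -> K)
    (p : {mpoly K[n]}) v0 :
  (\sum_(v <- msupp p) (c v * p@_v) *: 'X_[v])@_v0 = c v0 * p@_v0.
Proof.
rewrite raddf_sum /=.
under eq_bigr do rewrite mcoeffZ mcoeffX.
case: (boolP (v0 \in msupp p)) => h.
  rewrite (bigD1_seq v0) ?msupp_uniq //= eqxx mulr1 big1 ?addr0 //.
  by move=> v /negbTE ->; rewrite mulr0.
rewrite (memN_msupp_eq0 h) mulr0 big1_seq // => v /andP[_ hv].
have /negbTE -> : v != v0 by apply: contraNneq h => <-.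
by rewrite mulr0.
Qed.

Lemma bigmax_mem (d : Order.disp_t) (O : orderType d) (I : eqType)
    (s : seq I) (G : I -> O) x0 :
  \big[Order.max/x0]_(v <- s) G v \in x0 :: map G s.
Proof.
elim: s => [|a s IH]; first by rewrite big_nil mem_head.
rewrite big_cons maxEle; case: ifP => _; last by rewrite !inE eqxx orbT.
by move: IH; rewrite !inE => /orP[->|->]; rewrite ?orbT.
Qed.

Section WeightedComponents.
Variables (k : fieldType) (m : nat) (w : 'I_m -> int).
Local Notation R := {mpoly k[m]}.
Local Notation P := {poly R}.
Local Notation lm := (lam w).

Lemma lamD u v : lm (u + v)%MM = lm u + lm v.
Proof.
rewrite /lam -big_split /=; apply: eq_bigr => i _.
by rewrite mnmDE PoszD mulrDr.
Qed.

Lemma lam0 : lm 0%MM = 0.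
Proof. by rewrite /lam big1 // => i _; rewrite mnm0E mulr0. Qed.

Lemma bdeg_ge (q : R) u : u \in msupp q -> lm u <= bdeg w q.
Proof. by move=> hu; apply: le_bigmax_seq. Qed.

Lemma bdeg_attained (q : R) : q != 0 -> exists2 u, u \in msupp q & bdeg w q = lm u.
Proof.
move=> q0; have := bigmax_mem (msupp q) lm (lm (head 0%MM (msupp q))).
rewrite -/(bdeg w q) inE => /orP[/eqP->|/mapP[u hu ->]]; last by exists u.
exists (head 0%MM (msupp q)) => //.
by move: q0; rewrite -msupp_eq0; case: (msupp q) => //= a s _; exact: mem_head.
Qed.

(* [wcomp e y] is Q_e(y): the degree-e part of y for deg t = 1 and
   deg x^v = lambda(v), evaluated at t = 1. *)
Definition wcomp (e : int) (y : P) : R :=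
  \sum_(i < size y) \sum_(v <- msupp y`_i)
     (((i%:Z + lm v == e)%:R * y`_i@_v) *: 'X_[v]).

Lemma mcoeff_wcomp e y v : (wcomp e y)@_v =
  if 0 <= e - lm v then (y`_(absz (e - lm v)))@_v else 0.
Proof.
have eqE (i : nat) : (i%:Z + lm v == e) = (0 <= e - lm v) && (i == absz (e - lm v)).
  by apply/eqP/andP => [H|[/eqP H1 /eqP H2]]; [split; apply/eqP|]; lia.
rewrite /wcomp raddf_sum /=.
under eq_bigr do rewrite (mcoeff_sum_msupp (fun v => (_ + lm v == e)%:R)) eqE.
case: ifP => h /=; last by rewrite big1 // => i _; rewrite mul0r.
case: (ltnP (absz (e - lm v)) (size y)) => hj.
  rewrite (bigD1 (Ordinal hj)) //= eqxx mul1r big1 ?addr0 // => i /eqP hi.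
  suff /negbTE -> : (i : nat) != absz (e - lm v) by rewrite mul0r.
  by apply/eqP => hh; apply: hi; apply: val_inj.
rewrite nth_default // mcoeff0 big1 // => i _.
suff /negbTE -> : (i : nat) != absz (e - lm v) by rewrite mul0r.
by apply/eqP => hh; have := ltn_ord i; rewrite hh ltnNge hj.
Qed.

Lemma wcomp0 e : wcomp e 0 = 0.
Proof. by apply/mpolyP => v; rewrite mcoeff_wcomp coef0 mcoeff0; case: ifP. Qed.

Lemma wcompD e y1 y2 : wcomp e (y1 + y2) = wcomp e y1 + wcomp e y2.
Proof.
apply/mpolyP => v; rewrite mcoeffD !mcoeff_wcomp; case: ifP => _; last by rewrite addr0.
by rewrite coefD mcoeffD.
Qed.

Lemma wcomp_monomialM e (a : k) u (c : nat) y :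
  wcomp e (((a *: 'X_[u])%:P * 'X^c) * y) =
  (a *: 'X_[u]) * wcomp (e - c%:Z - lm u) y.
Proof.
apply/mpolyP => v.
rewrite mcoeff_wcomp -mulrA coefCM -!scalerAl !mcoeffZ !mcoeffXM coefXnM mcoeff_wcomp.
case: (boolP (u <= v)%MM) => huv; last by rewrite mulr0; case: ifP.
have lv : lm v = lm (v - u)%MM + lm u by rewrite -lamD submK.
case: (boolP (0 <= e - lm v)) => h1; case: (boolP (`|e - lm v| < c)%N) => h2;
  case: (boolP (0 <= e - c%:Z - lm u - lm (v - u)%MM)) => h3;
  rewrite ?mcoeff0 ?mulr0 //; try (exfalso; lia).
by do 3 f_equal; lia.
Qed.

Lemma wcompXM e y : wcomp e ('X * y) = wcomp (e - 1) y.
Proof.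
have -> : ('X : P) = (1 *: 'X_[0%MM])%:P * 'X^1.
  by rewrite scale1r mpolyX0 mul1r expr1.
by rewrite wcomp_monomialM mpolyX0 scale1r mul1r lam0 subr0.
Qed.

Lemma coef_gstar (q : R) j v :
  ((gstar w q)`_j)@_v = (j == absz (bdeg w q - lm v))%:R * q@_v.
Proof.
rewrite /gstar coef_sum.
rewrite (eq_bigr (fun u => ((j == absz (bdeg w q - lm u))%:R * q@_u) *: 'X_[u])).
  exact: (mcoeff_sum_msupp (fun u => (j == absz (bdeg w q - lm u))%:R)).
move=> u _; rewrite coefCM coefXn.
by case: eqP => _; rewrite ?mulr1 ?mul1r ?mulr0 ?mul0r ?scale0r.
Qed.

Lemma wcomp_gstar e (q : R) : wcomp e (gstar w q) = (e == bdeg w q)%:R *: q.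
Proof.
apply/mpolyP => v; rewrite mcoeff_wcomp coef_gstar mcoeffZ.
case: (boolP (v \in msupp q)) => hv; last first.
  by rewrite (memN_msupp_eq0 hv) !mulr0; case: ifP.
have hb := bdeg_ge hv.
case: ifP => h0.
  congr (_%:R * _); apply/eqP/eqP; lia.
suff /negbTE -> : e != bdeg w q by rewrite mul0r.
by apply/eqP => H; move/negbT: h0; lia.
Qed.

Lemma gstar0 : gstar w (0 : R) = 0.
Proof. by rewrite /gstar msupp0 big_nil. Qed.

Lemma coef_Xn_gstar_wcomp e y i v :
  (('X^(absz (e - bdeg w (wcomp e y))) * gstar w (wcomp e y))`_i)@_v =
  (i%:Z + lm v == e)%:R * y`_i@_v.
Proof.
set q := wcomp e y; rewrite coefXnM.
case: (boolP (v \in msupp q)) => hv; last first.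
  rewrite (_ : (_ : R)@_v = 0); last first.
    by case: ifP => _; rewrite ?mcoeff0 // coef_gstar (memN_msupp_eq0 hv) mulr0.
  case: (boolP (i%:Z + lm v == e)) => /eqP hie; last by rewrite mul0r.
  have := memN_msupp_eq0 hv; rewrite /q mcoeff_wcomp ifT; last lia.
  by rewrite (_ : absz (e - lm v) = i) => [->|]; [rewrite mulr0|lia].
have hb := bdeg_ge hv.
have qn0 : q != 0 by apply/eqP => q0; rewrite q0 msupp0 in hv.
have he : bdeg w q <= e.
  have [u hu ->] := bdeg_attained qn0.
  move: hu; rewrite mcoeff_msupp /q mcoeff_wcomp.
  by case: ifP => [h _|]; [lia|rewrite eqxx].
have hv' := hv; rewrite mcoeff_msupp /q mcoeff_wcomp in hv'.
case: ifP hv' => h0 hv'; last by rewrite eqxx in hv'.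
case: ifP => hi.
  rewrite mcoeff0 (_ : (i%:Z + lm v == e) = false) ?mul0r //.
  by apply/negbTE/eqP => H; lia.
rewrite coef_gstar.
case: (boolP (i%:Z + lm v == e)) => /eqP hie.
  rewrite (_ : (i - absz (e - bdeg w q) == absz (bdeg w q - lm v))%N); last first.
    by apply/eqP; move/negbT: hi; lia.
  by rewrite /q mcoeff_wcomp h0 (_ : absz (e - lm v) = i) //; lia.
rewrite (_ : (i - absz (e - bdeg w q) == absz (bdeg w q - lm v))%N = false) ?mul0r //.
by apply/negbTE/eqP => H; apply: hie; move/negbT: hi; lia.
Qed.

Lemma wcomp_decomp (y : P) : exists E : seq int,
  y = \sum_(e <- E) 'X^(absz (e - bdeg w (wcomp e y))) * gstar w (wcomp e y).
Proof.
set E := undup [seq (i%:Z + lm v) | i <- iota 0 (size y), v <- msupp y`_i].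
exists E; apply/polyP => i; apply/mpolyP => v.
rewrite coef_sum raddf_sum /=.
under eq_bigr do rewrite coef_Xn_gstar_wcomp.
case: (eqVneq (y`_i@_v) 0) => hy.
  by rewrite hy big1 // => e _; rewrite mulr0.
have hin : i%:Z + lm v \in E.
  rewrite mem_undup; apply/allpairsPdep; exists i, v; split => //.
    rewrite mem_iota add0n; case: (ltnP i (size y)) => // hs.
    by move: hy; rewrite nth_default // mcoeff0 eqxx.
  by rewrite mcoeff_msupp hy.
rewrite (bigD1_seq _ hin (undup_uniq _)) /= eqxx mul1r big1 ?addr0 //.
by move=> e; rewrite eq_sym => /negbTE ->; rewrite mul0r.
Qed.
End WeightedComponents.

Section WeightedClosure.
Variables (k : fieldType) (m : nat) (w : 'I_m -> int) (L : {mpoly k[m]} -> Prop).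
Local Notation P := {poly {mpoly k[m]}}.
Hypothesis idealL : is_ideal L.

(* This is the ideal L^* R[t]. *)
Definition wcomp_in (y : P) := forall e, L (wcomp w e y).

Lemma wcomp_in0 : wcomp_in 0.
Proof. by case: idealL => L0 _ e; rewrite wcomp0. Qed.

Lemma wcomp_inD y1 y2 : wcomp_in y1 -> wcomp_in y2 -> wcomp_in (y1 + y2).
Proof. by case: idealL => _ [LD _] h1 h2 e; rewrite wcompD; apply: LD. Qed.

Lemma wcomp_in_sum I (r : seq I) (G : I -> P) :
  (forall i, wcomp_in (G i)) -> wcomp_in (\sum_(i <- r) G i).
Proof. by move=> h; apply: big_ind => //; [exact: wcomp_in0|exact: wcomp_inD]. Qed.

Lemma wcomp_inM c y : wcomp_in y -> wcomp_in (c * y).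
Proof.
case: idealL => _ [_ LM] hy; rewrite -[c]coefK poly_def mulr_suml.
apply: wcomp_in_sum => i; rewrite -mul_polyC {1}[c`_i]mpolyE rmorph_sum !mulr_suml.
by apply: wcomp_in_sum => u e; rewrite wcomp_monomialM; apply: LM.
Qed.

Lemma wcomp_in_gstar q : L q -> wcomp_in (gstar w q).
Proof. by case: idealL => _ [_ LM] hq e; rewrite wcomp_gstar -mul_mpolyC; apply: LM. Qed.

Lemma wcomp_in_XnM r y : wcomp_in ('X^r * y) -> wcomp_in y.
Proof.
elim: r y => [|r IH] y; first by rewrite expr0 mul1r.
rewrite exprS -mulrA => h; apply: IH => e.
by have := h (e + 1); rewrite wcompXM addrK.
Qed.

Lemma wcomp_in_gen_gstar y : wcomp_in y ->
  gen_ideal (fun _ => True) (fun p => exists q, L q /\ q != 0 /\ p = gstar w q) y.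
Proof.
move=> hy; have [E ->] := wcomp_decomp w y.
apply: (big_ind (gen_ideal _ _)); [exact: gen_ideal0|exact: gen_idealD|] => e _.
case: (eqVneq (wcomp w e y) 0) => hq; first by rewrite hq gstar0 mulr0; apply: gen_ideal0.
by apply: gen_idealM => //; apply: gen_ideal_mem => //; exists (wcomp w e y).
Qed.

End WeightedClosure.

Section Substitution.
Variables (k : fieldType) (m : nat) (w : 'I_m -> int).
Local Notation R := {mpoly k[m]}.
Local Notation P := {poly R}.
Local Notation F := (Frac k m).
Local Notation t := (tS k m).

Definition const_frac := (@FracField.tofrac P) \o (@polyC R) \o (@mpolyC m k).

Definition tsubst (g : R) : F :=
  mmap const_frac (fun i => toF ('X_i)%:P * t ^ (- w i)) g.

Lemma tsubst0 : tsubst 0 = 0. Proof. exact: rmorph0. Qed.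
Lemma tsubstM g1 g2 : tsubst (g1 * g2) = tsubst g1 * tsubst g2.
Proof. exact: rmorphM. Qed.
Lemma tsubst_prod n (a : 'I_n -> R) :
  tsubst (\prod_(i < n) a i) = \prod_(i < n) tsubst (a i).
Proof. exact: rmorph_prod. Qed.

Lemma tS_neq0 : t != 0.
Proof. by rewrite /tS /toF tofrac_eq0 polyX_eq0. Qed.

Lemma prod_tS_expz I (r : seq I) (e : I -> int) :
  \prod_(i <- r) t ^ (e i) = t ^ (\sum_(i <- r) e i).
Proof.
elim: r => [|a r IH]; first by rewrite !big_nil expr0z.
by rewrite !big_cons IH expfzDr // tS_neq0.
Qed.

Lemma tsubst_monomial u :
  mmap1 (fun i => toF ('X_i)%:P * t ^ (- w i)) u = toF ('X_[u])%:P * t ^ (- lam w u).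
Proof.
rewrite /mmap1; under eq_bigr do rewrite exprMn.
rewrite big_split /=; congr (_ * _).
  rewrite mpolyXE_id /toF !rmorph_prod; apply: eq_bigr => i _.
  by rewrite !rmorphXn.
under eq_bigr do rewrite exprnP exprz_exp.
rewrite prod_tS_expz /lam -sumrN; congr (_ ^ _); apply: eq_bigr => i _.
by rewrite mulNr.
Qed.

Lemma toF_gstar g : toF (gstar w g) = t ^ bdeg w g * tsubst g.
Proof.
rewrite /gstar /toF rmorph_sum /tsubst /mmap mulr_sumr; apply: eq_big_seq => u hu.
rewrite tsubst_monomial rmorphM rmorphXn -mul_mpolyC polyCM rmorphM /=.
have -> : (FracField.tofrac 'X) ^+ absz (bdeg w g - lam w u) =
    t ^ bdeg w g * t ^ (- lam w u).
  by rewrite -expfzDr ?tS_neq0 // exprnP; congr (_ ^ _); have := bdeg_ge w hu; lia.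
by rewrite /toF [RHS]mulrCA -mulrA; congr (_ * _); exact: mulrCA.
Qed.

Lemma tS_expM_tsubst g (M : nat) : bdeg w g <= M%:Z ->
  t ^+ M * tsubst g = toF ('X^(absz (M%:Z - bdeg w g)) * gstar w g).
Proof.
move=> hM; rewrite toFM toFXn toF_gstar mulrA !exprnP -expfzDr ?tS_neq0 //.
by congr (_ ^ _ * _); lia.
Qed.

End Substitution.

Section Main.
Variables (k : fieldType) (m : nat) (w : 'I_m -> int) (I : {mpoly k[m]} -> Prop).
Local Notation R := {mpoly k[m]}.
Local Notation P := {poly R}.
Local Notation t := (tS k m).
Local Notation PS J n := (pow_ideal (@inS k m) J n).

Lemma tilde_gstar a : I a -> tilde w I (toF (gstar w a)).
Proof.
move=> Ia; case: (eqVneq a 0) => [->|a0]; first by rewrite gstar0 toF0; apply: gen_ideal0.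
by apply: (gen_ideal_mem (@inS1 k m)); exists a.
Qed.

Lemma tS_expM_prod_tsubst n (a : 'I_n -> R) : exists (N : nat) (C : P),
  t ^+ N * \prod_(i < n) tsubst w (a i) = toF C * \prod_(i < n) toF (gstar w (a i)).
Proof.
elim: n a => [|n IH] a; first by exists 0%N, 1; rewrite !big_ord0 toF1.
have [N [C HC]] := IH (fun i => a (lift ord0 i)).
set M := absz (bdeg w (a ord0)).
exists (M + N)%N, ('X^(absz (M%:Z - bdeg w (a ord0))) * C).
rewrite !big_ord_recl exprD mulrACA HC tS_expM_tsubst; last by rewrite /M; lia.
by rewrite !toFM mulrACA.
Qed.

Lemma pow_tilde_tS_expM_tsubst n g : powR I n g ->
  exists N : nat, PS (tilde w I) n (t ^+ N * tsubst w g).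
Proof.
move: g; apply: gen_ideal_ind.
- by exists 0%N; rewrite tsubst0 mulr0; apply: gen_ideal0.
- move=> x y Hx Hy.
  have -> : tsubst w (x + y) = tsubst w x + tsubst w y by exact: rmorphD.
  exact: (gen_ideal_expMD (@inS1 k m) (@inSM k m) (@inS_tS k m) Hx Hy).
move=> c x _ [a [Ia ->]].
have [N [C HC]] := tS_expM_prod_tsubst a.
exists (absz (bdeg w c) + N)%N.
rewrite tsubstM tsubst_prod exprD mulrACA HC tS_expM_tsubst; last lia.
rewrite mulrA -toFM; apply: (gen_idealM (@inSM k m)); first exact: inS_toF.
apply: (gen_ideal_mem (@inS1 k m)); exists (fun i => toF (gstar w (a i))).
by split=> // i; apply: tilde_gstar.
Qed.

Lemma tilde_pow_sat n z : tilde w (powR I n) z ->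
  saturation (@inS k m) (PS (tilde w I) n) t z.
Proof.
move: z; apply: gen_ideal_ind.
- by exists 0%N; split; [exact: inS0 | rewrite mulr0; apply: gen_ideal0].
- move=> x y [r1 [Sx Hx]] [r2 [Sy Hy]].
  have [N HN] := gen_ideal_expMD (@inS1 k m) (@inSM k m) (@inS_tS k m)
    (ex_intro _ r1 Hx) (ex_intro _ r2 Hy).
  by exists N; split; first exact: inSD.
move=> c x Sc [g [Lg [g0 ->]]].
have [N HN] := pow_tilde_tS_expM_tsubst Lg.
exists (N + absz (bdeg w g))%N; split; first by apply: inSM => //; apply: inS_toF.
rewrite mulrCA; apply: (gen_idealM (@inSM k m)) => //.
have -> : t ^+ (N + absz (bdeg w g)) * toF (gstar w g) =
    t ^+ (absz (`|bdeg w g| + bdeg w g)) * (t ^+ N * tsubst w g).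
  rewrite toF_gstar !mulrA !exprnP -!expfzDr ?tS_neq0 //; congr (_ ^ _ * _); lia.
by apply: (gen_idealM (@inSM k m)) => //; exact: inS_tS_exp.
Qed.

Definition gstar_prod n (q : P) :=
  exists a : 'I_n -> R, (forall i, I (a i)) /\ q = \prod_(i < n) gstar w (a i).

Lemma pow_tilde_gen_gstar_prod n x : PS (tilde w I) n x ->
  gen_ideal (@inS k m) (fun x => exists p, gstar_prod n p /\ x = toF p) x.
Proof.
apply: gen_ideal_min; [exact: gen_ideal0|exact: gen_idealD|
  by move=> c y Sc; apply: (gen_idealM (@inSM k m))|].
move=> y [b [Hb ->]].
have := gen_ideal_prod (@inS1 k m) (@inSM k m) Hb.
apply: gen_ideal_mono => q [b' [Hb' ->]].
have [a Ha] := fin_all_exists Hb'.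
exists (\prod_(i < n) gstar w (a i)); split.
  by exists a; split => // i; have [] := Ha i.
rewrite /toF rmorph_prod; apply: eq_bigr => i _.
by have [_ [_ ->]] := Ha i.
Qed.

Lemma wcomp_in_gstar_prod n q : gstar_prod n q -> wcomp_in w (powR I n) q.
Proof.
have idI := gen_ideal_is_ideal (fun z => exists a : 'I_n -> R,
  (forall i, I (a i)) /\ z = \prod_(i < n) a i).
move=> [a [Ia ->]].
set h := \prod_(i < n) a i.
have Ih : powR I n h by apply: gen_ideal_mem => //; exists a.
set B := \sum_(i < n) bdeg w (a i).
have E1 : toF (\prod_(i < n) gstar w (a i)) = t ^ B * tsubst w h.
  rewrite /toF rmorph_prod /h tsubst_prod -prod_tS_expz -big_split /=.
  by apply: eq_bigr => i _; rewrite -toF_gstar.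
pose M := (absz (bdeg w h) + absz B)%N.
have E2 : 'X^M * \prod_(i < n) gstar w (a i) =
          'X^(absz (M%:Z + B - bdeg w h)%R) * gstar w h.
  apply: toF_inj; rewrite !toFM !toFXn E1 toF_gstar !mulrA !exprnP.
  rewrite -!expfzDr ?tS_neq0 //; congr (_ ^ _ * _); rewrite /M; lia.
apply: (wcomp_in_XnM (r := M)); rewrite E2.
by apply: wcomp_inM => //; apply: wcomp_in_gstar.
Qed.

Lemma sat_pow_tilde n z : saturation (@inS k m) (PS (tilde w I) n) t z ->
  tilde w (powR I n) z.
Proof.
have idI : is_ideal (powR I n) := gen_ideal_is_ideal _.
move=> [r [[f [s [hs zE]]] hPI]].
have [p [d [gp hd E1]]] := gen_ideal_inS_toF (pow_tilde_gen_gstar_prod hPI).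
have Heq : 'X^r * f * kt_in m d = p * kt_in m s.
  apply: toF_inj; apply/eqP.
  rewrite !toFM -(eqr_div _ _ (toF_kt_in_neq0 m hs) (toF_kt_in_neq0 m hd)) -E1.
  by rewrite toFXn zE mulrA.
have Wp : wcomp_in w (powR I n) p.
  move: gp; apply: gen_ideal_min; first exact: wcomp_in0.
  - by move=> ? ?; apply: wcomp_inD.
  - by move=> c y _; apply: wcomp_inM.
  exact: wcomp_in_gstar_prod.
have Wfd : wcomp_in w (powR I n) (f * kt_in m d).
  by apply: (wcomp_in_XnM (r := r)); rewrite mulrA Heq mulrC; apply: wcomp_inM.
have -> : z = (toF (kt_in m (s * d)))^-1 * toF (f * kt_in m d).
  by rewrite zE kt_inM !toFM invfM mulrACA mulVf ?toF_kt_in_neq0 // mulr1 mulrC.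
apply: (gen_idealM (@inSM k m)); first by apply: inS_kt_inV; rewrite hornerM mulf_neq0.
have := gen_ideal_toF (wcomp_in_gen_gstar Wfd).
by apply: gen_ideal_mono => x [q [[g [Lg [g0 ->]]] ->]]; exists g.
Qed.
End Main.

Theorem lemma3p7 (k : fieldType) (m : nat) (w : 'I_m -> int)
  (I : {mpoly k[m]} -> Prop) :
  homogeneous_ideal I ->
  forall n : nat, forall z : Frac k m,
    tilde w (powR I n) z <->
    saturation (@inS k m) (pow_ideal (@inS k m) (tilde w I) n) (tS k m) z.
Proof.
move=> _ n z; split; [exact: tilde_pow_sat | exact: sat_pow_tilde].
Qed.
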